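(* Fix integers $t\ge 1$, $C_1,\dots,C_t\ge 1$, and $A_1,\dots,A_t$ with $0\le A_i\le C_i/2$ for all $i$. Let $S$ be the multiset of positive integers defined as follows: for each $i=1,\dots,t$, $S$ contains one copy of each positive integer congruent to $A_i$ modulo $C_i$ and, separately, one copy of each positive integer congruent to $-A_i$ modulo $C_i$, all these copies being regarded as distinct elements. (In particular, if $A_i\equiv -A_i \pmod{C_i}$, i.e. $A_i=0$ or $A_i=C_i/2$, that residue class contributes two distinct copies of each of its positive elements.) Let $D_S(N)$ be the number of partitions of $N$ into distinct elements of $S$, where, if no $A_i$ equals $0$, only partitions with an odd number of parts are counted. Let $r=\max(z,1)-1$, where $z$ is the number of indices $i$ with $A_i=0$. Then for every integer $N\ge 1$, $2^{r}\cdot D_S(N)$ equals the number of tuples $(\nu_1,\dots,\nu_t;d_1,\dots,d_t)$ with $\nu_i\in P$ and $d_i\in\mathbb Z$ for all $i$, $\sum_{i=1}^t d_i$ odd, and $$\sum_{i=1}^{t}C_i|\nu_i|+\sum_{i=1}^{t}C_i\binom{d_i}{2}+\sum_{i=1}^{t}A_i d_i=N.$$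
   Context: $P$ denotes the set of all integer partitions into positive parts (including the empty partition $\emptyset$, the unique partition of $0$); for a partition $\lambda$, $|\lambda|$ is the sum of its parts. For $d\in\mathbb Z$, $\binom{d}{2}=d(d-1)/2$. A partition of $N$ into distinct elements of a multiset $S$ is a finite set of distinct elements of $S$ (distinct copies of the same integer count as distinct elements) whose values sum to $N$. *)

From mathcomp Require Import all_boot all_order all_algebra.
Set Implicit Arguments. Unset Strict Implicit. Unset Printing Implicit Defensive.
Import GRing.Theory Num.Theory.

(* Elements of the multiset S with value <= N: a triple (i, s, m) stands for the
   copy of the positive integer m coming from the class A_i mod C_i (s = false)
   or from the class -A_i mod C_i (s = true).  Distinct triples = distinct copies. *)
Definition Selt (t N : nat) := ('I_t * bool * 'I_N.+1)%type.

Definition selt_val t N (e : Selt t N) : nat := nat_of_ord e.2.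

Definition in_S t (C A : 'I_t -> nat) N (e : Selt t N) : bool :=
  let: (i, s, m) := e in
  (0 < m) &&
  (if s then (m + A i) %% C i == 0 else m %% C i == A i %% C i).

(* D_S(N): partitions of N into distinct elements of S; if no A_i = 0, only
   those with an odd number of parts. (Every part of such a partition is <= N.) *)
Definition DS t (C A : 'I_t -> nat) (N : nat) : nat :=
  #|[set X : {set Selt t N} |
      [&& X \subset @in_S t C A N,
          \sum_(e in X) @selt_val t N e == N &
          [forall i, A i != 0] ==> odd #|X| ]]|.

Definition is_partition (s : seq nat) : bool := sorted geq s && all (fun x => 0 < x) s.

Definition binom2 (d : int) : int := ((d * (d - 1)) %/ 2)%Z.

Definition rpar t (A : 'I_t -> nat) : nat := (maxn #|[pred i | A i == 0]| 1).-1.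

Definition tuple_ok t (C A : 'I_t -> nat) (N : nat)
    (x : {ffun 'I_t -> seq nat} * {ffun 'I_t -> int}) : Prop :=
  [/\ forall i, is_partition (x.1 i),
      odd `|(\sum_(i < t) x.2 i)%R|%N &
      (\sum_(i < t) (Posz (C i) * Posz (sumn (x.1 i))
                     + Posz (C i) * binom2 (x.2 i) + Posz (A i) * x.2 i))%R = Posz N ].

From mathcomp Require Import all_boot all_order all_algebra.
From mathcomp Require Import zify ring.
Set Implicit Arguments. Unset Strict Implicit. Unset Printing Implicit Defensive.
Import Order.TTheory GRing.Theory Num.Theory.

(* The identity is proved by an explicit bijection built from Maya diagrams.

   A charged partition (nu, d) is encoded by its Maya set
   maya nu d = { nu_j + d - j | j >= 1 } (parts nu_j = 0 beyond the length),
   a set of integers containing every small and no large integer; the encoding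
   is a bijection onto such sets (maya_inj, maya_surj).  Giving the site z the
   weight A + C z, the "energy" of a Maya set (occupied sites z >= 0 count
   +(A + C z), empty sites z < 0 count -(A + C z)) changes by the weight of a
   site when that site is added; by induction this yields
   energy (maya nu d) = C |nu| + C binom(d,2) + A d        (energy_maya),
   and with C = 0, A = 1 the charge d itself.

   For a tuple (nu_i; d_i) the occupied sites k >= 0 of the i-th diagram give
   the elements A_i + C_i k of S (class +A_i), the empty sites -k give
   C_i k - A_i (class -A_i), except that the value 0 (the occupied site 0 when
   A_i = 0) is recorded as the index i in a set Z.  This is a bijection from the
   tuples counted on the right onto the pairs (X, Z) where X is a partition of N
   into distinct elements of S, Z is a set of indices with A_i = 0 and
   |X| + |Z| is odd (the parity of the total charge).  Finally, for a fixed X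
   there are 2^(z-1) such Z when z >= 1 and [|X| odd] when z = 0, so the pairs
   number 2^r D_S(N). *)

Lemma partition_cons a nu :
  is_partition (a :: nu) = [&& 0 < a, head 0 nu <= a & is_partition nu].
Proof.
rewrite /is_partition /=; case: nu => [|b nu] /=; first by rewrite !andbT.
by case: (0 < a); case: (b <= a); rewrite ?andbF.
Qed.

Lemma partition_behead nu : is_partition nu -> is_partition (behead nu).
Proof. by case: nu => // a nu; rewrite partition_cons => /and3P[]. Qed.

Lemma partition_head_behead nu :
  is_partition nu -> head 0 (behead nu) <= head 0 nu.
Proof. by case: nu => // a nu; rewrite partition_cons => /and3P[]. Qed.

Lemma partition_eq nu mu : is_partition nu -> is_partition mu ->
  head 0 nu = head 0 mu -> behead nu = behead mu -> nu = mu.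
Proof.
case: nu mu => [|a nu] [|b mu] //=; rewrite ?partition_cons.
- by move=> _ /and3P[+ _ _] hb; rewrite -hb.
- by move=> /and3P[+ _ _] _ ha; rewrite ha.
- by move=> _ _ -> ->.
Qed.

Local Open Scope ring_scope.

(* The Maya set of the charged partition (nu, d): z belongs to it iff
   z = nu_j + d - j for some j >= 1, reading nu_j = 0 past the last part. *)
Fixpoint maya (nu : seq nat) (d : int) (z : int) : bool :=
  if nu is a :: nu' then (z == a%:Z + d - 1) || maya nu' (d - 1) z else z < d.

Lemma maya_split nu d z :
  maya nu d z = (z == (head 0%N nu)%:Z + d - 1) || maya (behead nu) (d - 1) z.
Proof.
case: nu => [|a nu] //=; apply/idP/idP; last by case/orP => [/eqP|]; lia.
by move=> hz; case: (z =P d - 1) => [->|hne]; rewrite ?eqxx //=; lia.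
Qed.

Lemma maya_top nu d : maya nu d ((head 0%N nu)%:Z + d - 1).
Proof. by rewrite maya_split eqxx. Qed.

Lemma maya_max nu d z :
  is_partition nu -> maya nu d z -> z <= (head 0%N nu)%:Z + d - 1.
Proof.
elim: nu d => [|a nu IH] d /=; first by move=> _; lia.
rewrite partition_cons => /and3P[_ hha pnu] /orP[/eqP -> //|/(IH _ pnu)]; lia.
Qed.

Lemma maya_behead_top nu d : is_partition nu ->
  ~~ maya (behead nu) (d - 1) ((head 0%N nu)%:Z + d - 1).
Proof.
move=> pnu; apply/negP => /(maya_max (partition_behead pnu)).
have := partition_head_behead pnu; lia.
Qed.

Section MayaInjective.
Variables (nu mu : seq nat) (d e : int).
Hypotheses (pnu : is_partition nu) (pmu : is_partition mu)
           (heq : maya nu d =1 maya mu e).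

Lemma maya_eq_top : (head 0%N nu)%:Z + d = (head 0%N mu)%:Z + e.
Proof.
have := maya_max pnu (etrans (heq _) (maya_top mu e)).
have := maya_max pmu (etrans (esym (heq _)) (maya_top nu d)); lia.
Qed.

Lemma maya_eq_behead : maya (behead nu) (d - 1) =1 maya (behead mu) (e - 1).
Proof.
move=> z; have := heq z; rewrite (maya_split nu) (maya_split mu).
have -> : (head 0%N mu)%:Z + e - 1 = (head 0%N nu)%:Z + d - 1.
  by have := maya_eq_top; lia.
case: (z =P _) => [->|_] //= _; rewrite (negbTE (maya_behead_top d pnu)).
have -> : (head 0%N nu)%:Z + d - 1 = (head 0%N mu)%:Z + e - 1.
  by have := maya_eq_top; lia.
by rewrite (negbTE (maya_behead_top e pmu)).
Qed.
End MayaInjective.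

Lemma maya_inj nu mu d e : is_partition nu -> is_partition mu ->
  maya nu d =1 maya mu e -> nu = mu /\ d = e.
Proof.
move: {2}(size nu + size mu)%N (leqnn (size nu + size mu)) => n.
elim: n nu mu d e => [|n IH] nu mu d e hsize pnu pmu heq.
  have := maya_eq_top pnu pmu heq.
  by case: nu mu hsize {pnu pmu heq} => [|//] [|//] _ /=; split=> //; lia.
have htop := maya_eq_top pnu pmu heq.
have [hnil|hcons] := boolP ((nu == [::]) && (mu == [::])).
  by case/andP: hnil htop => /eqP-> /eqP-> /=; split=> //; lia.
have hsize' : (size (behead nu) + size (behead mu) <= n)%N.
  by move: hcons hsize; case: (nu) (mu) => [|? ?] [|? ?] //=; lia.
have [hbeh hde] := IH _ _ _ _ hsize' (partition_behead pnu) (partition_behead pmu)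
  (maya_eq_behead pnu pmu heq).
split; last by lia.
by apply: partition_eq => //; lia.
Qed.

(* Every set of integers containing all z < L and no z >= L + n is a Maya set:
   the element L + n - 1, if present, becomes a new first part. *)
Lemma maya_surj (P : int -> bool) (L : int) (n : nat) :
  (forall z, z < L -> P z) -> (forall z, L + n%:Z <= z -> ~~ P z) ->
  exists nu d, is_partition nu /\ P =1 maya nu d.
Proof.
elim: n P => [|n IH] P hlo hhi.
  exists [::], L; split => // z /=; apply/idP/idP => [|/hlo //].
  by apply: contraTT => hz; apply: hhi; lia.
set e := L + n%:Z.
have [Pe|nPe] := boolP (P e); last first.
  by apply: IH => // z hz; case: (z =P e) => [-> //|hze]; apply: hhi; lia.
pose P' z := (z != e) && P z.
have P'_lt z : P' z -> z < e.
  by case/andP=> /eqP hze; apply: contraTT => hz; apply: hhi; lia.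
have [nu [d [pnu hP']]] : exists nu d, is_partition nu /\ P' =1 maya nu d.
  apply: IH => z hz; rewrite /P'.
    by rewrite hlo // andbT; apply/eqP; lia.
  by rewrite negb_and; case: (z =P e) => //= hze; apply: hhi; lia.
have htop := P'_lt _ (etrans (hP' _) (maya_top nu d)).
have [a ha] : exists a : nat, a%:Z = e - d.
  by exists `|e - d|%N; have := leq0n (head 0%N nu); lia.
exists (if a is 0 then nu else a :: nu), (d + 1); split.
  case: a ha => [|a] ha //; rewrite partition_cons pnu andbT /=; lia.
move=> z; rewrite maya_split.
have -> : (head 0%N (if a is 0 then nu else a :: nu))%:Z + (d + 1) - 1 = e.
  case: a ha => [|a] ha /=; last by lia.
  by case: nu pnu hP' htop {P'_lt} => [|b nu] //=; rewrite ?partition_cons; lia.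
have -> : behead (if a is 0 then nu else a :: nu) = nu.
  case: a ha => [|a] //= ha.
  by case: nu pnu htop {hP'} => [|b nu] //=; rewrite partition_cons; lia.
by rewrite addrK -hP' /P'; case: (z =P e) => [->|].
Qed.

Lemma binom2_succ d : binom2 (d + 1) = binom2 d + d.
Proof.
rewrite /binom2.
have -> : (d + 1) * (d + 1 - 1) = d * 2 + d * (d - 1) by ring.
by rewrite divzMDl // addrC.
Qed.

Definition window_sum (B : nat) (f : int -> int) : int :=
  \sum_(k < B) (f k%:Z + f (- k.+1%:Z)).

Lemma eq_window_sum B f g : f =1 g -> window_sum B f = window_sum B g.
Proof. by move=> hfg; apply: eq_bigr => k _; rewrite !hfg. Qed.

Lemma window_sumD B f g :
  window_sum B (fun z => f z + g z) = window_sum B f + window_sum B g.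
Proof. by rewrite /window_sum -big_split; apply: eq_bigr => k _; rewrite addrACA. Qed.

Lemma window_sum_delta B (e : int) (g : int -> int) : - B%:Z <= e < B%:Z ->
  window_sum B (fun z => if z == e then g z else 0) = g e.
Proof.
have delta (m : nat) (x : int) : (m < B)%N ->
    \sum_(k < B) (if (k : nat) == m then x else 0) = x.
  by move=> hm; rewrite -big_mkcond (big_pred1 (Ordinal hm)).
case: e => m /andP[hlo hhi]; rewrite /window_sum.
- rewrite -(delta m (g m%:Z)); last by lia.
  apply: eq_bigr => k _; have -> : (- k.+1%:Z == m%:Z) = false by apply/eqP; lia.
  by rewrite eqz_nat addr0; case: eqP => [->|].
- rewrite -(delta m (g (Negz m))); last by lia.
  apply: eq_bigr => k _; have -> : (k%:Z == Negz m) = false by apply/eqP; lia.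
  by rewrite add0r NegzE eqr_opp eqz_nat eqSS; case: eqP => [->|].
Qed.

Lemma window_sum_widen B1 B2 f : (B1 <= B2)%N ->
  (forall k : nat, (B1 <= k)%N -> f k%:Z + f (- k.+1%:Z) = 0) ->
  window_sum B2 f = window_sum B1 f.
Proof.
move=> hB hf; rewrite /window_sum (big_ord_widen B2 (fun k => f k%:Z + f (- k.+1%:Z)) hB).
rewrite [RHS]big_mkcond; apply: eq_bigr => k _.
by case: ifP => // /negbT; rewrite -leqNgt => /hf.
Qed.

Lemma window_term_le B f (k : nat) : (k < B)%N -> (forall z, 0 <= f z) ->
  f k%:Z <= window_sum B f /\ f (- k.+1%:Z) <= window_sum B f.
Proof.
move=> hk hf; have hle : f k%:Z + f (- k.+1%:Z) <= window_sum B f.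
  by rewrite /window_sum (bigD1 (Ordinal hk)) //= lerDl sumr_ge0 // => j _; rewrite addr_ge0.
by split; apply: le_trans hle; rewrite ?lerDl ?lerDr.
Qed.

Definition site_charge (M : int -> bool) (z : int) : int := (M z)%:R - (z < 0)%R%:R.

Definition energy (C A : int) (M : int -> bool) (B : nat) : int :=
  window_sum B (fun z => site_charge M z * (A + C * z)).

Lemma energy_add_site C A (M M' : int -> bool) (e : int) B :
  ~~ M e -> M' =1 (fun z => (z == e) || M z) -> - B%:Z <= e < B%:Z ->
  energy C A M' B = energy C A M B + (A + C * e).
Proof.
move=> hMe hM' he; rewrite /energy -(window_sum_delta (fun z => A + C * z) he).
rewrite -window_sumD; apply: eq_window_sum => z; rewrite /site_charge hM'.
by case: (z =P e) => [->|_] /=; rewrite ?(negbTE hMe) /=; ring.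
Qed.

(* Raising the charge of the empty partition occupies the site d. *)
Lemma energy_nil_succ C A d B : - B%:Z <= d < B%:Z ->
  energy C A (maya [::] (d + 1)) B = energy C A (maya [::] d) B + (A + C * d).
Proof.
move=> hd; apply: energy_add_site => //=; first by rewrite ltxx.
by move=> z; apply/idP/idP; [case: (z =P d) => [->|]; lia | case/orP => [/eqP->|]; lia].
Qed.

Lemma energy_maya_nil C A d B : (`|d| <= B)%N ->
  energy C A (maya [::] d) B = C * binom2 d + A * d.
Proof.
elim/int_ind: d => [|n IH|n IH] hB.
- rewrite /binom2 mul0r div0z !mulr0 addr0 /energy /window_sum big1 // => k _.
  by rewrite /site_charge /= subrr !mul0r addr0.
- rewrite -[n.+1]addn1 PoszD energy_nil_succ; last by lia.
  by rewrite IH ?binom2_succ; [ring | lia].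
- have hb := binom2_succ (- n.+1%:Z).
  have hstep := @energy_nil_succ C A (- n.+1%:Z) B.
  rewrite (_ : - n.+1%:Z + 1 = - n%:Z) in hb hstep; last by lia.
  rewrite IH in hstep; last by lia.
  rewrite -[LHS](addrK (A + C * - n.+1%:Z)) -hstep; last by lia.
  by rewrite hb; ring.
Qed.

(* The energy formula: each part a of nu occupies the site a + d - 1, which
   raises the energy of the remaining charged partition by C a + C (d - 1) + A. *)
Lemma energy_maya C A nu d B : is_partition nu ->
  (sumn nu + size nu + `|d| <= B)%N ->
  energy C A (maya nu d) B = C * (sumn nu)%:Z + C * binom2 d + A * d.
Proof.
elim: nu d => [|a nu IH] d pnu hB; first by rewrite mulr0 add0r energy_maya_nil.
have /and3P[ha _ pnu'] : [&& 0 < a, head 0 nu <= a & is_partition nu]%N.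
  by rewrite -partition_cons.
rewrite (@energy_add_site C A (maya nu (d - 1)) _ (a%:Z + d - 1)) //; last 2 first.
- by have := maya_behead_top d pnu.
- move: hB => /=; lia.
rewrite IH //; last by move: hB => /=; lia.
have := binom2_succ (d - 1); rewrite subrK => ->; rewrite /= PoszD; ring.
Qed.

Close Scope ring_scope.

Lemma sum_partial_bij n K (P Q : pred nat) (h g : nat -> nat) (F : nat -> nat) :
 (forall m, m < n -> P m -> [/\ g m < K, Q (g m) & h (g m) = m]) ->
 (forall k, k < K -> Q k -> [/\ h k < n, P (h k) & g (h k) = k]) ->
 \sum_(m < n | P m) F m = \sum_(k < K | Q k) F (h k).
Proof.
move=> hg hh; rewrite -(big_mkord P) -(big_mkord Q (fun k => F (h k))).
rewrite -(big_filter _ P) -(big_filter _ Q).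
set sP := [seq m <- index_iota 0 n | P m]; set sQ := [seq k <- index_iota 0 K | Q k].
have memP m : (m \in sP) = (m < n) && P m by rewrite mem_filter mem_index_iota andbC.
have memQ k : (k \in sQ) = (k < K) && Q k by rewrite mem_filter mem_index_iota andbC.
have hperm : perm_eq (map g sP) sQ.
  apply: uniq_perm; rewrite ?filter_uniq ?iota_uniq //.
    rewrite map_inj_in_uniq ?filter_uniq ?iota_uniq // => m1 m2.
    rewrite !memP => /andP[/hg h1 /h1[_ _ e1]] /andP[/hg h2 /h2[_ _ e2]] e.
    by rewrite -e1 -e2 e.
  move=> k; rewrite memQ; apply/mapP/andP => [[m]|[hk hQ]].
    by rewrite memP => /andP[hm hP] ->; case: (hg m hm hP).
  by case: (hh k hk hQ) => hn hP e; exists (h k); rewrite ?memP ?hn ?hP.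
rewrite -(perm_big _ hperm) big_map; apply: eq_big_seq => m.
by rewrite memP => /andP[hm hP]; case: (hg m hm hP) => _ _ ->.
Qed.

Lemma Posz_sum n (P : pred 'I_n) (f : 'I_n -> nat) :
  Posz (\sum_(k < n | P k) f k) = (\sum_(k < n | P k) Posz (f k))%R.
Proof. by rewrite (big_morph Posz PoszD (erefl _)). Qed.

(* One Maya set M with site weight a + c z, read as a set of parts: the occupied
   sites k >= 0 give the parts a + c k, the empty sites -(k+1) the parts
   c (k+1) - a. *)
Section SingleDiagram.
Variables (c a N : nat) (M : int -> bool).

Definition fits := forall k : nat,
  (M k%:Z -> a + c * k <= N) /\ (~~ M (- k.+1%:Z)%R -> c * k.+1 - a <= N).

Definition occ_sum (F : nat -> nat) :=
  \sum_(k < N.+1 | (0 < a + c * k) && M k%:Z) F (a + c * k).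
Definition hole_sum (F : nat -> nat) :=
  \sum_(k < N.+1 | ~~ M (- k.+1%:Z)%R) F (c * k.+1 - a).

Lemma charge_sums : energy 0 1 M N.+1 =
  (Posz (\sum_(k < N.+1 | M k%:Z) 1%N) - Posz (hole_sum (fun _ => 1%N)))%R.
Proof.
rewrite /energy /window_sum big_split /= /hole_sum !Posz_sum -sumrN.
by congr (_ + _)%R; rewrite [RHS]big_mkcond; apply: eq_bigr => k _;
  rewrite /site_charge; case: (M _) => /=; lia.
Qed.

Hypotheses (hc : 0 < c) (ha : a.*2 <= c).

Lemma a_lt_c : a < c.
Proof. by move: ha hc; rewrite -addnn; lia. Qed.

Lemma a_le_hole k : a <= c * k.+1.
Proof. have : c <= c * k.+1 by rewrite leq_pmulr. by move: ha; rewrite -addnn; lia. Qed.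

Lemma hole_gt k : k < c * k.+1 - a.
Proof.
have : k <= c * k by rewrite leq_pmull.
by rewrite mulnS; move: ha; rewrite -addnn; lia.
Qed.

(* Only the site 0 can carry the part 0, and only when a = 0. *)
Lemma occ_count :
  \sum_(k < N.+1 | M k%:Z) 1 = occ_sum (fun _ => 1) + ((a == 0) && M 0).
Proof.
rewrite /occ_sum big_mkcond [in RHS]big_mkcond !big_ord_recl /= addnAC.
congr (_ + _); first by rewrite muln0 addn0; case: (M 0); case: a.
apply: eq_bigr => k _; have -> // : 0 < a + c * bump 0 k.
by have := leq_pmulr (bump 0 k) hc; rewrite /bump /=; lia.
Qed.

Lemma energy_sums : energy c a M N.+1 = Posz (occ_sum id + hole_sum id).
Proof.
rewrite /energy /window_sum PoszD !Posz_sum.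
rewrite [X in _ = (X + _)%R]big_mkcond [X in _ = (_ + X)%R]big_mkcond -big_split /=.
apply: eq_bigr => k _; rewrite /site_charge /=; congr (_ + _)%R.
  by case: (M k%:Z) => /=; case: ifP => /=; lia.
by case: (M _) => /=; rewrite -?subzn ?a_le_hole //; lia.
Qed.

Hypothesis hfit : fits.

Lemma fits_above k : N < k -> ~~ M k%:Z.
Proof.
move=> hk; apply/negP => /(fun h => (hfit k).1 h).
have : k <= c * k by rewrite leq_pmull. lia.
Qed.

Lemma fits_below k : N <= k -> M (- k.+1%:Z)%R.
Proof. by move=> hk; apply/negPn/negP => /(fun h => (hfit k).2 h); have := hole_gt k; lia. Qed.

(* A fitting Maya set has neutral sites outside the window [-(N+1), N+1). *)
Lemma energy_window C A B : N < B -> energy C A M B = energy C A M N.+1.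
Proof.
move=> hB; apply: window_sum_widen => // k hk.
by rewrite /site_charge (negbTE (fits_above hk)) fits_below //=; lia.
Qed.

Lemma occ_sum_elems (F : nat -> nat) :
  \sum_(m < N.+1 | [&& 0 < m, m %% c == a %% c & M (m %/ c)%:Z]) F m = occ_sum F.
Proof.
rewrite /occ_sum; apply: (@sum_partial_bij N.+1 N.+1
  (fun m => [&& 0 < m, m %% c == a %% c & M (m %/ c)%:Z])
  (fun k => (0 < a + c * k) && M k%:Z) (fun k => a + c * k) (fun m => m %/ c))
  => [m hm /and3P[hm0 hmod hM]|k hk /andP[hk0 hM]].
- have e : a + c * (m %/ c) = m.
    by rewrite [RHS](divn_eq m c) (eqP hmod) (modn_small a_lt_c) mulnC addnC.
  by rewrite e hm0 hM; split=> //; apply: leq_ltn_trans (leq_div m c) hm.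
- have hN := (hfit k).1 hM.
  have ed : (a + c * k) %/ c = k.
    by rewrite addnC mulnC divnMDl // (divn_small a_lt_c) addn0.
  have em : (a + c * k) %% c = a %% c by rewrite addnC mulnC modnMDl.
  by rewrite ed hk0 hM em eqxx ltnS hN.
Qed.

Lemma hole_sum_elems (F : nat -> nat) :
  \sum_(m < N.+1 | [&& 0 < m, (m + a) %% c == 0 & ~~ M (- ((m + a) %/ c)%:Z)%R]) F m
  = hole_sum F.
Proof.
rewrite /hole_sum; apply: (@sum_partial_bij N.+1 N.+1
  (fun m => [&& 0 < m, (m + a) %% c == 0 & ~~ M (- ((m + a) %/ c)%:Z)%R])
  (fun k => ~~ M (- k.+1%:Z)%R) (fun k => c * k.+1 - a) (fun m => ((m + a) %/ c).-1))
  => [m hm /and3P[hm0 hmod hM]|k hk hM].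
- have e : (m + a) %/ c * c = m + a by apply: divnK.
  have hq : 0 < (m + a) %/ c by move: e; case: (_ %/ c) => //; lia.
  have e2 : c * ((m + a) %/ c).-1.+1 - a = m by rewrite prednK // mulnC e addnK.
  have := hole_gt ((m + a) %/ c).-1; rewrite e2 => hlt.
  by rewrite prednK //; split=> //; lia.
- have hN := (hfit k).2 hM.
  have e : c * k.+1 - a + a = c * k.+1 by rewrite subnK ?a_le_hole.
  have hpos : 0 < c * k.+1 - a by have := hole_gt k; lia.
  by rewrite e mulKn // modnMr hpos hM ltnS hN.
Qed.
End SingleDiagram.

Lemma site_term_ge0 (c a : nat) M z : a.*2 <= c ->
  (0 <= site_charge M z * (a%:Z + c%:Z * z))%R.
Proof. by rewrite -addnn /site_charge => h; case: (M z); case: (ltrP z 0) => hz /=; nia. Qed.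

Lemma energy_ge0 (c a : nat) M B : a.*2 <= c -> (0 <= energy c a M B)%R.
Proof. by move=> h; apply: sumr_ge0 => k _; rewrite addr_ge0 ?site_term_ge0. Qed.

Lemma odd_absz_sub (m n : nat) : odd `|(m%:Z - n%:Z)%R| = odd (m + n).
Proof.
case: (leqP m n) => h.
  have -> : `|(m%:Z - n%:Z)%R| = n - m by lia.
  by rewrite oddB // oddD addbC.
have -> : `|(m%:Z - n%:Z)%R| = m - n by lia.
by rewrite oddB ?oddD // ltnW.
Qed.

Section Encoding.
Variables (t : nat) (C A : 'I_t -> nat) (N : nat).
Hypotheses (hC : forall i, 0 < C i) (hA : forall i, (A i).*2 <= C i).

Definition ctuple := ({ffun 'I_t -> seq nat} * {ffun 'I_t -> int})%type.

Definition diagram (x : ctuple) i := maya (x.1 i) (x.2 i).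

Definition partitions (x : ctuple) := forall i, is_partition (x.1 i).
Definition tuple_fits (x : ctuple) := forall i, fits (C i) (A i) N (diagram x i).

Definition occupies (x : ctuple) (e : Selt t N) : bool :=
  let: (i, s, m) := e in
  if s then ~~ diagram x i (- (((m : nat) + A i) %/ C i)%:Z)%R
  else diagram x i ((m : nat) %/ C i)%:Z.

Definition parts_of (x : ctuple) := [set e : Selt t N | in_S C A e && occupies x e].
Definition zeros_of (x : ctuple) := [set i : 'I_t | (A i == 0) && diagram x i 0].
Definition encode (x : ctuple) := (parts_of x, zeros_of x).

Definition weight (x : ctuple) i :=
  (Posz (C i) * Posz (sumn (x.1 i)) + Posz (C i) * binom2 (x.2 i) + Posz (A i) * x.2 i)%R.

Lemma weight_energy (x : ctuple) (i : 'I_t) (B : nat) : is_partition (x.1 i) ->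
  (sumn (x.1 i) + size (x.1 i) + `|x.2 i| <= B) ->
  weight x i = energy (C i) (A i) (diagram x i) B.
Proof. by move=> p hB; rewrite /weight energy_maya. Qed.

(* Each weight is a sum of nonnegative site terms, so when the weights add up
   to N every part read off the diagrams is at most N. *)
Lemma tuple_ok_fits (x : ctuple) : tuple_ok C A N x -> tuple_fits x.
Proof.
case=> hp _ hsum i k.
set B := maxn k.+1 (sumn (x.1 i) + size (x.1 i) + `|x.2 i|).
have hW : weight x i = energy (C i) (A i) (diagram x i) B.
  by apply: weight_energy => //; rewrite leq_maxr.
have hWN : (weight x i <= N%:Z)%R.
  rewrite -hsum (bigD1 i) //= -/(weight x i) lerDl; apply: sumr_ge0 => j _.
  by rewrite -/(weight x j) (@weight_energy x j _ (hp j) (leqnn _)) energy_ge0.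
have [hpos hneg] := window_term_le (ltn_ord (Ordinal (leq_maxl k.+1 _) : 'I_B))
  (fun z => site_term_ge0 (diagram x i) z (hA i)).
rewrite -[window_sum _ _]/(energy (C i) (A i) (diagram x i) B) -hW in hpos hneg.
rewrite /site_charge /= in hpos hneg.
split=> hM.
- by move: hpos hWN; rewrite hM /=; lia.
- by move: hneg hWN; rewrite (negbTE hM); have := a_le_hole (hC i) (hA i) k; lia.
Qed.

Lemma sum_parts (F : nat -> nat) (x : ctuple) : tuple_fits x ->
  \sum_(e in parts_of x) F (selt_val e) =
  \sum_i (occ_sum (C i) (A i) N (diagram x i) F + hole_sum (C i) (A i) N (diagram x i) F).
Proof.
move=> hfit; rewrite big_mkcond /=.
transitivity (\sum_(ib : 'I_t * bool) \sum_(m : 'I_N.+1)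
    (if (ib, m) \in parts_of x then F m else 0)).
  by rewrite pair_bigA; apply: eq_bigr => -[[i b] m] _.
transitivity (\sum_i \sum_(b : bool) \sum_(m : 'I_N.+1)
    (if (i, b, m) \in parts_of x then F m else 0)).
  by rewrite [RHS]pair_bigA; apply: eq_bigr => -[i b] _.
apply: eq_bigr => i _; rewrite big_bool /= addnC.
rewrite -(occ_sum_elems (hC i) (hA i) (hfit i)) -(hole_sum_elems (hC i) (hA i) (hfit i)).
by congr (_ + _); rewrite [RHS]big_mkcond; apply: eq_bigr => m _; rewrite inE /= andbA.
Qed.

Lemma weight_parts (x : ctuple) : partitions x -> tuple_fits x ->
  Posz (\sum_(e in parts_of x) selt_val e) = (\sum_i weight x i)%R.
Proof.
move=> hp hfit; rewrite (sum_parts id hfit) Posz_sum; apply: eq_bigr => i _.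
set B := maxn N.+1 (sumn (x.1 i) + size (x.1 i) + `|x.2 i|).
rewrite (weight_energy (B := B)) ?leq_maxr // (energy_window (hC i) (hA i) (hfit i)).
  by rewrite energy_sums.
by rewrite leq_maxl.
Qed.

Lemma parity_parts (x : ctuple) : partitions x -> tuple_fits x ->
  odd (#|parts_of x| + #|zeros_of x|) = odd `|(\sum_(i < t) x.2 i)%R|.
Proof.
move=> hp hfit.
have hcharge i : x.2 i = (Posz (occ_sum (C i) (A i) N (diagram x i) (fun _ => 1)
      + ((A i == 0) && diagram x i 0))
    - Posz (hole_sum (C i) (A i) N (diagram x i) (fun _ => 1)))%R.
  rewrite -(occ_count N (diagram x i) (hC i) (hA i)) -charge_sums.
  set B := maxn N.+1 (sumn (x.1 i) + size (x.1 i) + `|x.2 i|).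
  rewrite -(energy_window (hC i) (hA i) (hfit i) _ _ (leq_maxl _ _ : N < B)).
  by rewrite energy_maya ?leq_maxr // !mul0r !add0r mul1r.
rewrite -sum1_card (sum_parts (fun _ => 1) hfit) -sum1_card [X in _ + X]big_mkcond /=.
rewrite (eq_bigr _ (fun i _ => hcharge i)) sumrB -!Posz_sum odd_absz_sub -!big_split /=.
by congr odd; apply: eq_bigr => i _; rewrite inE addnAC; case: (_ && _).
Qed.

Definition marked := [set p : {set Selt t N} * {set 'I_t} |
  [&& p.1 \subset @in_S t C A N, \sum_(e in p.1) selt_val e == N,
      p.2 \subset [set i | A i == 0] & odd (#|p.1| + #|p.2|)]].

Lemma encode_marked (x : ctuple) : tuple_ok C A N x -> encode x \in marked.
Proof.
move=> tok; have hfit := tuple_ok_fits tok; case: tok => hp hodd hsum.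
rewrite inE /= parity_parts // hodd andbT; apply/and3P; split.
- by apply/subsetP => e; rewrite inE => /andP[].
- by rewrite -eqz_nat weight_parts // -hsum.
- by apply/subsetP => i; rewrite !inE => /andP[].
Qed.

Definition decode (p : {set Selt t N} * {set 'I_t}) i (z : int) : bool :=
  if (0 <= z)%R then
    if (A i == 0) && (`|z| == 0) then i \in p.2
    else (A i + C i * `|z| <= N) &&
         (((i, false, inord (A i + C i * `|z|)) : Selt t N) \in p.1)
  else ~~ ((C i * `|z| - A i <= N) &&
           (((i, true, inord (C i * `|z| - A i)) : Selt t N) \in p.1)).

Lemma decode_encode (x : ctuple) : tuple_fits x ->
  forall i, diagram x i =1 decode (encode x) i.
Proof.
move=> hfit i [k|k]; rewrite /decode /encode /=.
- case hz: ((A i == 0) && (k == 0)).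
    by move/andP: hz => [/eqP hA0 /eqP ->]; rewrite inE hA0 eqxx.
  case: (leqP (A i + C i * k) N) => hv /=; last first.
    by apply/negP => /(fun h => (hfit i k).1 h); lia.
  have ed : (A i + C i * k) %/ C i = k.
    by rewrite addnC mulnC divnMDl // (divn_small (a_lt_c (hC i) (hA i))) addn0.
  have em : (A i + C i * k) %% C i = A i %% C i by rewrite addnC mulnC modnMDl.
  have vpos : 0 < A i + C i * k.
    by move: hz; have := hC i; case: (A i) => [|?]; case: k {ed em hv} => [|?] //=; lia.
  by rewrite inE /in_S /occupies /= inordK ?ltnS // vpos em eqxx ed.
- rewrite NegzE; have hle := a_le_hole (hC i) (hA i) k.
  case: (leqP (C i * k.+1 - A i) N) => hv /=; last first.
    by apply/negPn/negP => /(fun h => (hfit i k).2 h); lia.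
  rewrite inE /in_S /occupies /= inordK ?ltnS // subnK // modnMr eqxx mulKn //.
  by have := hole_gt (hC i) (hA i) k; case: (_ - _) => [|?] //= _; rewrite negbK.
Qed.

Lemma encode_inj (x y : ctuple) : tuple_ok C A N x -> tuple_ok C A N y ->
  encode x = encode y -> x = y.
Proof.
move=> tx ty e.
have hxy i : x.1 i = y.1 i /\ x.2 i = y.2 i.
  case: (tx) (ty) => [px _ _] [py _ _]; apply: maya_inj (px i) (py i) _ => z.
  have := decode_encode (tuple_ok_fits tx) i z.
  by have := decode_encode (tuple_ok_fits ty) i z; rewrite e /diagram => -> ->.
case: x y hxy {tx ty e} => [x1 x2] [y1 y2] /= hxy.
by congr (_, _); apply/ffunP => i; case: (hxy i).
Qed.

(* Decoded sets are Maya sets: they contain every z < -N and no z > N. *)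
Lemma decode_tuple p : exists x : ctuple,
  partitions x /\ forall i, diagram x i =1 decode p i.
Proof.
have ex i : exists nd : seq nat * int,
    is_partition nd.1 /\ decode p i =1 maya nd.1 nd.2.
  have hlo z : (z < - N%:Z)%R -> decode p i z.
    case: z => [k|k] hk; first by move: hk; lia.
    rewrite /decode /=; apply/negP => /andP[hv _].
    by have := hole_gt (hC i) (hA i) k; move: hk; rewrite NegzE; lia.
  have hhi z : (- N%:Z + N.*2.+1%:Z <= z)%R -> ~~ decode p i z.
    case: z => [k|k] hk; last by move: hk; rewrite NegzE; lia.
    rewrite /decode /= (_ : (k == 0) = false) ?andbF; last by apply/negbTE; lia.
    by apply/negP => /andP[hv _]; have := leq_pmull k (hC i); lia.
  by have [nu [d hnd]] := maya_surj hlo hhi; exists (nu, d).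
have [f hf] := fin_all_exists ex.
exists ([ffun i => (f i).1], [ffun i => (f i).2]); split=> i; rewrite /diagram /= !ffunE.
  by case: (hf i).
by case: (hf i) => _ h z; rewrite h.
Qed.

Section Decoding.
Variables (p : {set Selt t N} * {set 'I_t}) (x : ctuple).
Hypothesis hdec : forall i, diagram x i =1 decode p i.

Lemma decode_fits : tuple_fits x.
Proof.
move=> i k; rewrite !hdec /decode /=; split.
- by case: ifP => [/andP[/eqP -> /eqP ->] _|_ /andP[] //]; rewrite muln0.
- by rewrite negbK => /andP[].
Qed.

Lemma parts_decode : p.1 \subset @in_S t C A N -> parts_of x = p.1.
Proof.
move=> hXS; apply/setP => -[[i s] m]; rewrite inE /occupies !hdec /decode.
have [hS|hS] := boolP (in_S C A ((i, s, m) : Selt t N)); last first.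
  by apply/esym/negP => /(subsetP hXS) hin; exact: (negP hS hin).
move: hS; rewrite /in_S /=; case: s => /andP[hm0 hmod].
- have e : (m + A i) %/ C i * C i = m + A i by apply: divnK.
  set q := (m + A i) %/ C i in e *.
  have hq : 0 < q by move: e; case: q => //; lia.
  have -> : (0 <= - q%:Z)%R = false by apply/negbTE; lia.
  have -> : `|(- q%:Z)%R| = q by lia.
  by rewrite mulnC e addnK negbK /= (inord_val m) -ltnS ltn_ord.
- have e : A i + C i * (m %/ C i) = m.
    have hAC := a_lt_c (hC i) (hA i).
    by rewrite [RHS](divn_eq m (C i)) (eqP hmod) (modn_small hAC) mulnC addnC.
  rewrite /= (_ : (A i == 0) && (m %/ C i == 0) = false); last first.
    by apply/negP => /andP[/eqP hA0 /eqP hq]; move: e hm0; rewrite hA0 hq muln0 => <-.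
  by rewrite e (inord_val m) -ltnS ltn_ord.
Qed.

Lemma zeros_decode : p.2 \subset [set i | A i == 0] -> zeros_of x = p.2.
Proof.
move=> hZ; apply/setP => i; rewrite inE hdec /decode /=.
case hA0: (A i == 0) => //=.
by apply/esym/negP => /(subsetP hZ); rewrite inE hA0.
Qed.
End Decoding.

Lemma encode_surj p : p \in marked -> exists x, tuple_ok C A N x /\ encode x = p.
Proof.
case: p => X Z; rewrite inE /= => /and4P [hXS hsum hZ hodd].
have [x [hp hdec]] := decode_tuple (X, Z).
have hfit := decode_fits hdec.
have hX : parts_of x = X := parts_decode hdec hXS.
have hZx : zeros_of x = Z := zeros_decode hdec hZ.
exists x; split; last by rewrite /encode hX hZx.
split=> //; first by rewrite -parity_parts // hX hZx.
by rewrite -weight_parts // hX (eqP hsum).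
Qed.
End Encoding.

Section ParitySubsets.
Variable T : finType.

Definition parity_subsets (W : {set T}) (b : bool) :=
  [set Z : {set T} | (Z \subset W) && (odd #|Z| == b)].

(* Toggling a fixed element w of W exchanges even and odd subsets. *)
Lemma card_parity_swap (W : {set T}) w b : w \in W ->
  #|parity_subsets W b| = #|parity_subsets W (~~ b)|.
Proof.
move=> hw; pose f (Z : {set T}) := if w \in Z then Z :\ w else w |: Z.
have fK : involutive f.
  move=> Z; rewrite /f; case hZ: (w \in Z); first by rewrite setD11 setD1K.
  by rewrite setU11 setU1K ?hZ.
have f_odd Z : odd #|f Z| = ~~ odd #|Z|.
  rewrite /f; case: ifP => hZ; last by rewrite cardsU1 hZ.
  by rewrite (cardsD1 w Z) hZ /= negbK.
have f_sub Z : (f Z \subset W) = (Z \subset W).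
  rewrite /f; case: ifP => hZ; last by rewrite subUset sub1set hw.
  apply/idP/idP => h; last by apply: subset_trans h; apply: subD1set.
  by rewrite -(setD1K hZ) subUset sub1set hw h.
have -> : parity_subsets W (~~ b) = f @: parity_subsets W b.
  apply/setP => Z; rewrite !inE; apply/idP/imsetP.
    move=> /andP[h1 h2]; exists (f Z); last by rewrite fK.
    by rewrite inE f_sub h1 f_odd (eqP h2) negbK eqxx.
  by move=> [Y]; rewrite inE => /andP[h1 /eqP h2] ->; rewrite f_sub h1 f_odd h2 eqxx.
by rewrite card_imset //; apply: can_inj fK.
Qed.

Lemma card_parity_subsets (W : {set T}) b : W != set0 ->
  #|parity_subsets W b| = 2 ^ #|W|.-1.
Proof.
case/set0Pn => w hw.
have htot : #|parity_subsets W true| + #|parity_subsets W false| = 2 ^ #|W|.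
  rewrite -card_powerset -(cardsID [set Z : {set T} | odd #|Z|] (powerset W)).
  by congr (_ + _); apply: eq_card => Z; rewrite !inE; case: (odd _); rewrite ?andbT ?andbF.
have hW : 0 < #|W| by apply/card_gt0P; exists w.
have := card_parity_swap true hw; move: htot.
rewrite -(prednK hW) expnS.
by case: b => /=; lia.
Qed.

Lemma card_parity_subsets0 b : #|parity_subsets set0 b| = ~~ b.
Proof.
have -> : parity_subsets set0 b = if b then set0 else [set set0].
  apply/setP => Z; case: b; rewrite !inE subset0;
  by case: (Z =P set0) => [->|] //=; rewrite cards0.
by case: b; rewrite ?cards0 ?cards1.
Qed.
End ParitySubsets.

Definition distinct_partition t (C A : 'I_t -> nat) N (X : {set Selt t N}) :=
  (X \subset @in_S t C A N) && (\sum_(e in X) selt_val e == N).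

Lemma card_marked_fibres t (C A : 'I_t -> nat) N : #|marked C A N| =
  \sum_(X : {set Selt t N}) (if distinct_partition C A X
    then #|parity_subsets [set i | A i == 0] (~~ odd #|X|)| else 0).
Proof.
rewrite -sum1_card big_mkcond /=.
transitivity (\sum_(X : {set Selt t N}) \sum_(Z : {set 'I_t})
                 (if (X, Z) \in marked C A N then 1 else 0)).
  by rewrite [RHS]pair_bigA; apply: eq_bigr => -[X Z].
apply: eq_bigr => X _; case hX: (distinct_partition C A X); last first.
  by rewrite big1 // => Z _; rewrite inE /=; move: hX; rewrite /distinct_partition;
    case: (X \subset _); case: (_ == N).
rewrite -sum1_card [RHS]big_mkcond /=; apply: eq_bigr => Z _.
rewrite !inE /=; move: hX; rewrite /distinct_partition => /andP[-> ->] /=.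
by rewrite oddD; case: (odd #|X|); case: (odd #|Z|); rewrite ?andbT ?andbF.
Qed.

Lemma card_marked t (C A : 'I_t -> nat) N : #|marked C A N| = 2 ^ rpar A * DS C A N.
Proof.
set W0 := [set i : 'I_t | A i == 0].
have hDS : DS C A N = \sum_(X : {set Selt t N})
    (if distinct_partition C A X && ([forall i, A i != 0] ==> odd #|X|) then 1 else 0).
  by rewrite /DS -sum1_card big_mkcond /=; apply: eq_bigr => X _; rewrite inE andbA.
have hz : #|[pred i | A i == 0]| = #|W0| by apply: eq_card => i; rewrite !inE.
rewrite card_marked_fibres hDS /rpar hz; have [hW|hW] := eqVneq W0 set0.
- have hf : [forall i, A i != 0].
    apply/forallP => i; apply/negP => hi.
    have : i \in W0 by rewrite inE hi.
    by rewrite hW inE.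
  rewrite hf -/W0 hW cards0 /= expn0 mul1n; apply: eq_bigr => X _.
  by rewrite card_parity_subsets0 negbK; case: (distinct_partition _ _ _).
- have hf : [forall i, A i != 0] = false.
    apply/negP => /forallP hall; move/eqP: hW; apply; apply/setP => i.
    by rewrite !inE; apply/negbTE/hall.
  have hpos : 0 < #|W0| by rewrite card_gt0.
  rewrite hf (maxn_idPl hpos) big_distrr /=; apply: eq_bigr => X _.
  rewrite -/W0 card_parity_subsets // andbT.
  by case: (distinct_partition _ _ _); rewrite ?muln1 ?muln0.
Qed.

Lemma lift_seq (T U : eqType) (f : T -> U) (Q : T -> Prop) (l : seq U) :
  (forall p, p \in l -> exists x, Q x /\ f x = p) ->
  exists s : seq T, map f s = l /\ (forall x, x \in s -> Q x).
Proof.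
elim: l => [|p l IH] h; first by exists [::].
have [x [hQ hx]] := h p (mem_head _ _).
have [s [hs hQs]] := IH (fun q hq => h q (mem_behead (s := p :: l) hq)).
exists (x :: s); split; first by rewrite /= hx hs.
by move=> y; rewrite inE => /orP[/eqP ->|/hQs].
Qed.

Theorem lemma2p2 (t : nat) (C A : 'I_t -> nat)
  (ht : 1 <= t) (hC : forall i, 1 <= C i) (hA : forall i, 2 * A i <= C i)
  (N : nat) (hN : 1 <= N) :
  exists s : seq ({ffun 'I_t -> seq nat} * {ffun 'I_t -> int}),
    [/\ uniq s,
        (forall x, x \in s <-> tuple_ok C A N x) &
        2 ^ rpar A * DS C A N = size s].
Proof.
have hA2 i : (A i).*2 <= C i by rewrite -mul2n.
have hsurj p : p \in enum (marked C A N) ->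
    exists x, tuple_ok C A N x /\ @encode t C A N x = p.
  by rewrite mem_enum; apply: encode_surj.
have [s [hs hQ]] := lift_seq hsurj.
exists s; split.
- by have := enum_uniq (mem (marked C A N)); rewrite -hs => /map_uniq.
- move=> x; split; first exact: hQ.
  move=> tx; have := encode_marked hC hA2 tx; rewrite -mem_enum -hs => /mapP [y hy hxy].
  by rewrite (encode_inj hC hA2 tx (hQ y hy) hxy).
- by rewrite -card_marked cardE -hs size_map.
Qed.
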